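(* In the setting of the context, let $$SA(M)=-\frac12\sum_{i=1}^{2n}[M_i,M_{i+1}],\qquad SA(N)=-\frac12\sum_{i=1}^{2n}[N_{i-\frac12},N_{i+\frac12}]$$ be the signed areas of $M$ and $N$. Then $$SA(M)-SA(N)=\sum_{i=1}^{n}\beta_i^2\,[V_{i-\frac12},V_{i+\frac12}].$$
   Context: $[x,y]$ denotes the determinant of the matrix with columns $x,y\in\mathbb{R}^2$. Fix $n\ge2$; indices (integer and half-integer) are read modulo $2n$. $U$ is a convex $2n$-gon with distinct vertices $U_1,\dots,U_{2n}$ in counterclockwise order with $U_{i+n}=-U_i$, and $V_{i+\frac12}=(U_{i+1}-U_i)/[U_i,U_{i+1}]$. Let $c>0$ and let $P$ be a convex polygon with nonempty interior and vertex list $P_1,\dots,P_{2n}$ (consecutive entries may coincide) with $P_{i+1}-P_i$ a nonnegative multiple of $V_{i+\frac12}$ and $P_i-P_{i+n}=2cU_i$ for all $i$. The central equidistant $M$ has vertices $M_i=\frac12(P_i+P_{i+n})$; define $\alpha_{i+\frac12}$ by $M_{i+1}-M_i=\alpha_{i+\frac12}(U_{i+1}-U_i)$ and $\beta_i=\frac12\sum_{j=i}^{i+n-1}\alpha_{j+\frac12}[U_j,U_{j+1}]$. The involute $N$ of $M$ is the polygon with vertices $N_{i+\frac12}=M_i+\beta_iV_{i+\frac12}$, $1\le i\le 2n$. *)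

From HB Require Import structures.
From mathcomp Require Import all_boot all_order all_algebra.
Set Implicit Arguments. Unset Strict Implicit. Unset Printing Implicit Defensive.
Import Order.TTheory GRing.Theory Num.Theory.
Local Open Scope ring_scope.

Section Defs.
Variable R : realFieldType.
Notation pt := (R * R)%type.

Definition det2 (x y : pt) : R := x.1 * y.2 - x.2 * y.1.
Definition vadd (x y : pt) : pt := (x.1 + y.1, x.2 + y.2).
Definition vsub (x y : pt) : pt := (x.1 - y.1, x.2 - y.2).
Definition vscale (a : R) (x : pt) : pt := (a * x.1, a * x.2).

(* Indices are natural numbers read modulo 2n (sequences are 2n-periodic);
   a half-integer index i + 1/2 is represented by the natural number i. *)

Definition Vh (U : nat -> pt) (i : nat) : pt :=
  vscale (det2 (U i) (U i.+1))^-1 (vsub (U i.+1) (U i)).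

Definition Mc (n : nat) (P : nat -> pt) (i : nat) : pt :=
  vscale (2%:R)^-1 (vadd (P i) (P (i + n)%N)).

Definition beta (n : nat) (U : nat -> pt) (alpha : nat -> R) (i : nat) : R :=
  (2%:R)^-1 * \sum_(i <= j < i + n) alpha j * det2 (U j) (U j.+1).

Definition Ninv (n : nat) (U P : nat -> pt) (alpha : nat -> R) (i : nat) : pt :=
  vadd (Mc n P i) (vscale (beta n U alpha i) (Vh U i)).

Definition SA_M (n : nat) (P : nat -> pt) : R :=
  - (2%:R)^-1 * \sum_(1 <= i < (2 * n).+1) det2 (Mc n P i) (Mc n P i.+1).

Definition SA_N (n : nat) (U P : nat -> pt) (alpha : nat -> R) : R :=
  - (2%:R)^-1 * \sum_(1 <= i < (2 * n).+1)
      det2 (Ninv n U P alpha i.-1) (Ninv n U P alpha i).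

Definition ccw_convex_distinct (n : nat) (U : nat -> pt) : Prop :=
  (forall i j, U i = U j -> (i %% (2 * n) = j %% (2 * n))%N) /\
  (forall i j, (j %% (2 * n) != i %% (2 * n))%N ->
               (j %% (2 * n) != i.+1 %% (2 * n))%N ->
     0 < det2 (vsub (U i.+1) (U i)) (vsub (U j) (U i))).

(* P (vertex list P_1..P_{2n}, consecutive entries may coincide) is a convex
   polygon, counterclockwise: all vertices weakly to the left of each edge line. *)
Definition convex_poly (P : nat -> pt) : Prop :=
  forall i j, 0 <= det2 (vsub (P i.+1) (P i)) (vsub (P j) (P i)).

Definition nonempty_interior (P : nat -> pt) : Prop :=
  exists i j k, det2 (vsub (P j) (P i)) (vsub (P k) (P i)) != 0.

End Defs.

(* Write [V_k] for [V_{k+1/2}] and [b] for [beta].  Since [M] is n-periodic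
   and [U] is n-antiperiodic, so is [alpha]; hence [b_{k+1} = b_k - alpha_k
   [U_k, U_{k+1}]], and the hypothesis on [alpha] becomes
   [M_{k+1} = M_k + (b_k - b_{k+1}) V_k], i.e. [N_k = M_{k+1} + b_{k+1} V_k].
   Expanding the determinants, each term [[M_k, M_{k+1}] - [N_{k-1}, N_k]]
   is [-b_k^2 [V_{k-1}, V_k]] plus a telescoping term [b_k [M_{k-1}, V_{k-1}]
   - b_{k+1} [M_k, V_k]].  As [b] and [V] are n-antiperiodic, the telescoping
   part closes up over 2n steps and the sum of the squares over 2n steps is
   twice the sum over n steps. *)
From HB Require Import structures.
From mathcomp Require Import all_boot all_order all_algebra.
From mathcomp Require Import ring zify.
Set Implicit Arguments. Unset Strict Implicit. Unset Printing Implicit Defensive.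
Import Order.TTheory GRing.Theory Num.Theory.
Local Open Scope ring_scope.

Section PlaneVectors.
Variable R : realFieldType.
Implicit Types (x y z w : (R * R)%type) (a b : R).

Lemma det2Zl a x y : det2 (vscale a x) y = a * det2 x y.
Proof. by case: x => ? ?; case: y => ? ?; rewrite /det2 /=; ring. Qed.

Lemma det2Zr a x y : det2 x (vscale a y) = a * det2 x y.
Proof. by case: x => ? ?; case: y => ? ?; rewrite /det2 /=; ring. Qed.

Lemma det2N x y : det2 (vscale (-1) x) (vscale (-1) y) = det2 x y.
Proof. by rewrite det2Zl det2Zr mulN1r mulN1r opprK. Qed.

Lemma det2_subr x y : det2 x (vsub y x) = det2 x y.
Proof. by case: x => ? ?; case: y => ? ?; rewrite /det2 /=; ring. Qed.

Lemma det2_edge_antipode x y :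
  det2 (vsub y x) (vsub (vscale (-1) x) x) = 2%:R * det2 x y.
Proof. by case: x => ? ?; case: y => ? ?; rewrite /det2 /=; ring. Qed.

Lemma vscaleA a b x : vscale a (vscale b x) = vscale (a * b) x.
Proof. by case: x => ? ?; rewrite /vscale /=; congr pair; ring. Qed.

Lemma vsubN x y : vsub (vscale (-1) x) (vscale (-1) y) = vscale (-1) (vsub x y).
Proof. by case: x => ? ?; case: y => ? ?; rewrite /vsub /vscale /=; congr pair; ring. Qed.

Lemma vsub_eq_vadd x y z : vsub x y = z -> x = vadd y z.
Proof.
by case: x => ? ?; case: y => ? ?; move <-; rewrite /vadd /vsub /=; congr pair; ring.
Qed.

Lemma vscale_injl a b w z : det2 z w != 0 -> vscale a w = vscale b w -> a = b.
Proof.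
move=> nz /(congr1 (det2 z)); rewrite !det2Zr.
exact: mulIf.
Qed.

End PlaneVectors.

Lemma half_mulr2n (R : numFieldType) (x : R) : (2%:R)^-1 * (x *+ 2) = x.
Proof. by rewrite mulrnAr -mulrnAl -mulr_natr mulVf ?mul1r // pnatr_eq0. Qed.

Lemma sumr_double_period (V : nmodType) (f : nat -> V) (n : nat) :
  (forall i, f (i + n)%N = f i) ->
  \sum_(0 <= i < 2 * n) f i = (\sum_(0 <= i < n) f i) *+ 2.
Proof.
move=> f_period; rewrite (big_cat_nat _ (n := n)) //=; last by lia.
have -> : \sum_(n <= i < 2 * n) f i = \sum_(0 <= i < n) f (i + n)%N.
  by rewrite -{1}(add0n n) big_addn (_ : 2 * n - n = n)%N; last by lia.
by rewrite (eq_bigr _ (fun i _ => f_period i)) mulr2n.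
Qed.

Section InvoluteAreaDefect.
Variables (R : realFieldType) (m v : nat -> (R * R)%type) (b : nat -> R).
Hypothesis m_step : forall k, m k.+1 = vadd (m k) (vscale (b k - b k.+1) (v k)).

Let involute k := vadd (m k) (vscale (b k) (v k)).

Lemma area_defect_step i :
  det2 (m i.+1) (m i.+2) - det2 (involute i) (involute i.+1)
  = b i.+1 * det2 (m i) (v i) - b i.+2 * det2 (m i.+1) (v i.+1)
    - b i.+1 ^+ 2 * det2 (v i) (v i.+1).
Proof.
rewrite /involute !m_step.
case: (m i) => ? ?; case: (v i) => ? ?; case: (v i.+1) => ? ?.
by rewrite /det2 /vadd /vscale /=; ring.
Qed.

Variable n : nat.
Hypothesis m_period : forall k, m (k + n)%N = m k.
Hypothesis v_antiperiod : forall k, v (k + n)%N = vscale (-1) (v k).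
Hypothesis b_antiperiod : forall k, b (k + n)%N = - b k.

Lemma area_defect_closed :
  \sum_(0 <= i < 2 * n) (det2 (m i.+1) (m i.+2) - det2 (involute i) (involute i.+1))
  = - (\sum_(0 <= i < n) b i.+1 ^+ 2 * det2 (v i) (v i.+1)) *+ 2.
Proof.
pose F k := b k.+1 * det2 (m k) (v k).
have F_period k : F (k + n)%N = F k.
  by rewrite /F -addSn b_antiperiod m_period v_antiperiod det2Zr mulN1r mulrNN.
pose G k := b k.+1 ^+ 2 * det2 (v k) (v k.+1).
have G_period k : G (k + n)%N = G k.
  by rewrite /G -addSn b_antiperiod !v_antiperiod det2N sqrrN.
rewrite (eq_bigr _ (fun i _ => area_defect_step i)) sumrB.
rewrite (sumr_double_period G_period).
have -> : \sum_(0 <= i < 2 * n) (F i - F i.+1) = 0.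
  rewrite (eq_bigr (fun i => - (F i.+1 - F i))) => [|i _]; last by rewrite opprB.
  rewrite sumrN telescope_sumr // mul2n -addnn F_period -{1}(add0n n) F_period.
  by rewrite subrr oppr0.
by rewrite sub0r mulNrn.
Qed.

End InvoluteAreaDefect.

Section CentralEquidistant.
Variables (R : realFieldType) (n : nat) (U P : nat -> (R * R)%type) (alpha : nat -> R).
Hypothesis n_ge2 : (2 <= n)%N.
Hypothesis U_antiperiod : forall i, U (i + n)%N = vscale (-1) (U i).
Hypothesis U_ccw : forall i j, (j %% (2 * n) != i %% (2 * n))%N ->
  (j %% (2 * n) != i.+1 %% (2 * n))%N ->
  0 < det2 (vsub (U i.+1) (U i)) (vsub (U j) (U i)).
Hypothesis P_period : forall i, P (i + 2 * n)%N = P i.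
Hypothesis M_alpha : forall i,
  vsub (Mc n P i.+1) (Mc n P i) = vscale (alpha i) (vsub (U i.+1) (U i)).

Notation M := (Mc n P).
Notation V := (Vh U).
Notation b := (beta n U alpha).

(* The antipode [U_{i+n} = -U_i] is a vertex off the edge [U_i U_{i+1}]. *)
Lemma det2_U_gt0 i : 0 < det2 (U i) (U i.+1).
Proof.
have := U_ccw (j := (i + n)%N) (i := i).
rewrite U_antiperiod det2_edge_antipode pmulr_rgt0 ?ltr0n //; apply.
  rewrite -[X in _ != X %[mod _]]addn0 eqn_modDl modn_small ?mod0n; lia.
rewrite -(addn1 i) eqn_modDl modn_small ?modn_small; lia.
Qed.

Lemma det2_U_antiperiod i : det2 (U (i + n)%N) (U (i + n).+1) = det2 (U i) (U i.+1).
Proof. by rewrite -addSn !U_antiperiod det2N. Qed.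

Lemma Mc_period i : M (i + n)%N = M i.
Proof.
rewrite /Mc -addnA addnn -mul2n P_period; congr vscale.
by case: (P i) => ? ?; case: (P (i + n)%N) => ? ?; rewrite /vadd /=; congr pair; exact: addrC.
Qed.

Lemma alpha_antiperiod i : alpha (i + n)%N = - alpha i.
Proof.
have := M_alpha (i + n); rewrite -addSn !Mc_period M_alpha !U_antiperiod vsubN vscaleA.
move/(vscale_injl (z := U i)); rewrite det2_subr gt_eqF ?det2_U_gt0 // => /(_ isT) ->.
by rewrite mulrN1 opprK.
Qed.

Lemma beta_antiperiod i : b (i + n)%N = - b i.
Proof.
rewrite /beta big_addn addnK -mulrN -sumrN; congr (_ * _).
by apply: eq_bigr => j _; rewrite alpha_antiperiod det2_U_antiperiod mulNr.
Qed.

Lemma beta_succ i : b i.+1 = b i - alpha i * det2 (U i) (U i.+1).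
Proof.
pose e j := alpha j * det2 (U j) (U j.+1).
have shift : \sum_(i.+1 <= j < i.+1 + n) e j = \sum_(i <= j < i + n) e j - e i *+ 2.
  apply: (addrI (e i)).
  rewrite addSn big_add1 /= -big_nat_recl ?leq_addr // big_nat_recr ?leq_addr //=.
  by rewrite /e alpha_antiperiod det2_U_antiperiod mulNr mulr2n; ring.
by rewrite /beta -/e shift mulrBr half_mulr2n.
Qed.

Lemma Vh_antiperiod i : V (i + n)%N = vscale (-1) (V i).
Proof.
rewrite /Vh -addSn !U_antiperiod det2N vsubN !vscaleA.
by congr vscale; ring.
Qed.

Lemma Mc_step i : M i.+1 = vadd (M i) (vscale (b i - b i.+1) (V i)).
Proof.
apply: vsub_eq_vadd; rewrite M_alpha beta_succ /Vh vscaleA.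
by rewrite opprB addrC subrK -mulrA mulfV ?mulr1 // gt_eqF ?det2_U_gt0.
Qed.

End CentralEquidistant.

Theorem proposition4p2 (R : realFieldType) (n : nat) (U P : nat -> (R * R)%type)
    (c : R) (alpha : nat -> R) :
  (2 <= n)%N ->
  (forall i, U (i + 2 * n)%N = U i) ->
  (forall i, U (i + n)%N = vscale (-1) (U i)) ->
  ccw_convex_distinct n U ->
  0 < c ->
  (forall i, P (i + 2 * n)%N = P i) ->
  convex_poly P ->
  nonempty_interior P ->
  (forall i, exists t : R, 0 <= t /\ vsub (P i.+1) (P i) = vscale t (Vh U i)) ->
  (forall i, vsub (P i) (P (i + n)%N) = vscale (2%:R * c) (U i)) ->
  (forall i, vsub (Mc n P i.+1) (Mc n P i) = vscale (alpha i) (vsub (U i.+1) (U i))) ->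
  SA_M n P - SA_N n U P alpha =
    \sum_(1 <= i < n.+1) (beta n U alpha i) ^+ 2 * det2 (Vh U i.-1) (Vh U i).
Proof.
move=> n_ge2 _ U_antiperiod [_ U_ccw] _ P_period _ _ _ _ M_alpha.
have defect := area_defect_closed
  (Mc_step n_ge2 U_antiperiod U_ccw P_period M_alpha)
  (Mc_period P_period) (Vh_antiperiod U_antiperiod)
  (beta_antiperiod n_ge2 U_antiperiod U_ccw P_period M_alpha).
rewrite /SA_M /SA_N /Ninv !big_add1 /= -mulrBr -sumrB defect.
by rewrite mulNrn mulrNN half_mulr2n.
Qed.
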